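(* Let $(N,v)$ be a TU game with $\Pi(v)\neq\emptyset$. Then $\{\Pi(v),\Gamma(v),\Upsilon(v),\Psi(v)\}$ is a partition of $\Omega(v)$: each of the four sets is a subset of $\Omega(v)$, and every element of $\Omega(v)$ belongs to exactly one of them.
   Context: A TU game is a pair $(N,v)$ with $N=\{1,\dots,n\}$ and $v:2^N\to\mathbb{R}$, $v(\emptyset)=0$. $\mathcal{P}(N)$ denotes the set of partitions of $N$. A core solution is a pair $(\mathbf{x},\rho)$ with $\mathbf{x}\in\mathbb{R}^n$, $\rho\in\mathcal{P}(N)$, such that $\sum_{i\in S}x_i\ge v(S)$ for all $S\subseteq N$ and $\sum_{i\in S}x_i=v(S)$ for all $S\in\rho$; $\Pi(v)$ is the set of core solutions. $K_v=\max_{\rho\in\mathcal{P}(N)}\sum_{S\in\rho}v(S)$. A feasible environment state is a pair $(\mathbf{a},\mathcal{C})$ with $\mathbf{a}\in\mathbb{R}^n$ and $\mathcal{C}$ a set of pairwise disjoint subsets of $N$ such that $a_i\ge v(\{i\})$ for all $i\in N$ and $\sum_{i\in S}a_i\le v(S)$ for all $S\in\mathcal{C}$; $\Omega(v)$ is the set of feasible environment states. Define $\Gamma(v)=\{(\mathbf{a},\mathcal{C})\in\Omega(v):\sum_{i\in N}a_i=K_v,\ \sum_{i\in S}a_i\ge v(S)\ \forall S\subseteq N,\ \mathcal{C}\notin\mathcal{P}(N)\}$, $\Upsilon(v)=\{(\mathbf{a},\mathcal{C})\in\Omega(v):\sum_{i\in N}a_i>K_v,\ \sum_{i\in S}a_i\ge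 v(S)\ \forall S\subseteq N\}$, $\Psi(v)=\{(\mathbf{a},\mathcal{C})\in\Omega(v):\exists S\subseteq N \text{ with } \sum_{i\in S}a_i<v(S)\}$. *)

From mathcomp Require Import all_boot all_order all_algebra.
Set Implicit Arguments. Unset Strict Implicit. Unset Printing Implicit Defensive.
Import Order.TTheory GRing.Theory Num.Theory.
Local Open Scope ring_scope.

(* A TU game on N = 'I_n : v : {set 'I_n} -> R, with v set0 = 0 assumed
   as a hypothesis of the theorem.  Payoff vectors are functions 'I_n -> R,
   x(S) := \sum_(i in S) x i. *)
Section Game.
Variables (R : realFieldType) (n : nat).
Implicit Types (v : {set 'I_n} -> R) (x : 'I_n -> R).

Definition coal_sum x (S : {set 'I_n}) : R := \sum_(i in S) x i.

Definition is_partition (P : {set {set 'I_n}}) : bool := partition P [set: 'I_n].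

Definition pw_disjoint (C : {set {set 'I_n}}) : Prop :=
  forall S T, S \in C -> T \in C -> S != T -> [disjoint S & T].

Definition in_core x v : Prop := forall S : {set 'I_n}, coal_sum x S >= v S.

Definition Pi v (x : 'I_n -> R) (rho : {set {set 'I_n}}) : Prop :=
  is_partition rho /\ in_core x v /\ (forall S, S \in rho -> coal_sum x S = v S).

Definition singleton_partition : {set {set 'I_n}} := [set [set i] | i : 'I_n].

Definition Kv v : R :=
  \big[Num.max / (\sum_(S in singleton_partition) v S)]_(P | is_partition P)
     \sum_(S in P) v S.

Definition Omega v (a : 'I_n -> R) (C : {set {set 'I_n}}) : Prop :=
  pw_disjoint C /\ (forall i, a i >= v [set i]) /\
  (forall S, S \in C -> coal_sum a S <= v S).

Definition Gamma v a C : Prop :=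
  Omega v a C /\ coal_sum a [set: 'I_n] = Kv v /\ in_core a v /\ ~~ is_partition C.

Definition Upsilon v a C : Prop :=
  Omega v a C /\ coal_sum a [set: 'I_n] > Kv v /\ in_core a v.

Definition Psi v a C : Prop :=
  Omega v a C /\ exists S : {set 'I_n}, coal_sum a S < v S.

End Game.

From mathcomp Require Import all_boot all_order all_algebra.
Set Implicit Arguments. Unset Strict Implicit. Unset Printing Implicit Defensive.
Import Order.TTheory GRing.Theory Num.Theory.
Local Open Scope ring_scope.

(* A core payoff a satisfies a(N) >= sum_(S in P) v(S) for every partition P,
   hence a(N) >= K_v; for a core solution the blocks of rho are tight, so
   a(N) = K_v.  Feasibility (a(S) <= v(S) on C) together with the core
   condition makes every block of C tight, so a feasible core state (a, C) is a
   core solution exactly when C partitions N.  Hence a feasible state lies in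
   Psi iff a is not in the core, and otherwise it is sorted by comparing a(N)
   with K_v and by whether C is a partition. *)

Lemma singleton_partitionP (n : nat) : is_partition (singleton_partition n).
Proof.
rewrite /is_partition /singleton_partition; apply/and3P; split.
- apply/eqP/setP => i; rewrite inE; apply/bigcupP.
  by exists [set i]; rewrite ?imset_f ?set11.
- apply/trivIsetP => _ _ /imsetP[i _ ->] /imsetP[j _ ->] neq_ij.
  by rewrite disjoints1 inE; apply: contraNneq neq_ij => ->.
- by apply/imsetP => -[i _ /esym/eqP]; rewrite -cards_eq0 cards1.
Qed.

Section CoreSolutions.
Variables (R : realFieldType) (n : nat).
Implicit Types (v : {set 'I_n} -> R) (a : 'I_n -> R) (P C : {set {set 'I_n}}).

Lemma coal_sum_partition a P :
  is_partition P -> \sum_(S in P) coal_sum a S = coal_sum a [set: 'I_n].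
Proof.
by case/and3P => /eqP cover_P triv_P _; rewrite /coal_sum -cover_P big_trivIset.
Qed.

Lemma le_Kv v P : is_partition P -> \sum_(S in P) v S <= Kv v.
Proof. exact: le_bigmax_cond. Qed.

Lemma partition_sum_le_core a v P :
  in_core a v -> is_partition P -> \sum_(S in P) v S <= coal_sum a [set: 'I_n].
Proof.
by move=> core_a part_P; rewrite -(coal_sum_partition a part_P) ler_sum.
Qed.

Lemma Kv_le_core a v : in_core a v -> Kv v <= coal_sum a [set: 'I_n].
Proof.
move=> core_a; apply: bigmax_le => [|P]; apply: partition_sum_le_core => //.
exact: singleton_partitionP.
Qed.

Lemma Pi_sum_Kv v a C : Pi v a C -> coal_sum a [set: 'I_n] = Kv v.
Proof.
case=> part_C [core_a tight_C]; apply/eqP; rewrite eq_le Kv_le_core // andbT.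
by rewrite -(coal_sum_partition a part_C) (eq_bigr v) ?le_Kv.
Qed.

Lemma Pi_Omega v a C : Pi v a C -> Omega v a C.
Proof.
case=> /and3P[_ /trivIsetP triv_C _] [core_a tight_C].
split; [exact: triv_C | split].
- by move=> i; move: (core_a [set i]); rewrite /coal_sum big_set1.
- by move=> S /tight_C ->.
Qed.

Lemma Omega_core_partition_Pi v a C :
  Omega v a C -> in_core a v -> is_partition C -> Pi v a C.
Proof.
case=> _ [_ feas_C] core_a part_C; split=> //; split=> // S C_S.
by apply/eqP; rewrite eq_le feas_C ?core_a.
Qed.

Lemma in_coreVlt v a : in_core a v \/ exists S, coal_sum a S < v S.
Proof.
have [/forallP core_a | /forallPn[S]] := boolP [forall S, v S <= coal_sum a S].
  by left.
by rewrite -ltNge; right; exists S.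
Qed.

End CoreSolutions.

Theorem proposition7 (R : realFieldType) (n : nat) (v : {set 'I_n} -> R)
  (v0 : v set0 = 0)
  (hPi : exists (x : 'I_n -> R) (rho : {set {set 'I_n}}), Pi v x rho) :
  (* each of the four sets is a subset of Omega(v) *)
  (forall a C, Pi v a C -> Omega v a C) /\
  (forall a C, Gamma v a C -> Omega v a C) /\
  (forall a C, Upsilon v a C -> Omega v a C) /\
  (forall a C, Psi v a C -> Omega v a C) /\
  (* every element of Omega(v) lies in exactly one of them *)
  (forall a C, Omega v a C ->
     (Pi v a C /\ ~ Gamma v a C /\ ~ Upsilon v a C /\ ~ Psi v a C) \/
     (~ Pi v a C /\ Gamma v a C /\ ~ Upsilon v a C /\ ~ Psi v a C) \/
     (~ Pi v a C /\ ~ Gamma v a C /\ Upsilon v a C /\ ~ Psi v a C) \/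
     (~ Pi v a C /\ ~ Gamma v a C /\ ~ Upsilon v a C /\ Psi v a C)).
Proof.
have core_of_Pi a C : Pi v a C -> in_core a v by case=> _ [].
have core_of_Gamma a C : Gamma v a C -> in_core a v by case=> _ [_ []].
have core_of_Upsilon a C : Upsilon v a C -> in_core a v by case=> _ [].
split; first exact: Pi_Omega.
do 3 (split; first by move=> a C []).
move=> a C omega_aC.
have [core_a | [S lt_aS]] := in_coreVlt v a; last first.
  have not_core : ~ in_core a v by move/(_ S); rewrite leNgt lt_aS.
  do 3 right; split; [by move/core_of_Pi | split; [by move/core_of_Gamma |]].
  by split; [move/core_of_Upsilon | split; last exists S].
have not_Psi : ~ Psi v a C by case=> _ [S]; rewrite ltNge core_a.
have := Kv_le_core core_a; rewrite le_eqVlt => /predU1P[eq_Kv | lt_Kv]; last first.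
  have sum_neq_Kv : coal_sum a [set: 'I_n] <> Kv v by move/eqP; rewrite gt_eqF.
  do 2 right; left; split; first by move/Pi_sum_Kv.
  by split; [case=> _ [] | split].
have not_Upsilon : ~ Upsilon v a C by case=> _ []; rewrite eq_Kv ltxx.
have [part_C | not_part_C] := boolP (is_partition C).
  left; split; first exact: Omega_core_partition_Pi.
  by split; [case=> _ [_ [_]]; rewrite part_C | split].
right; left; split; first by case=> part_C; rewrite part_C in not_part_C.
by split; [split | split].
Qed.
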